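(* Let $B$ be an $n\times n$ skew-symmetrizable matrix, $\mathbf d=(d_1,\dots,d_n)$ positive integers, $D=\mathrm{diag}(d_1,\dots,d_n)$, and let $C^t=(c^t_{ij})$ be the $C$-matrices of the $(\mathbf d,\mathbf z)$-cluster pattern with principal coefficients and initial seed $(\mathbf x,\mathbf y,B)$. Put $\tilde c^t_{ij}=d_i^{-1}c^t_{ij}d_j$, i.e. $\tilde C^t=D^{-1}C^tD$. Then for every vertex $t$, $\tilde C^t$ is an integer matrix and equals the $C$-matrix at $t$ of the ordinary cluster pattern with principal coefficients and initial seed $(\mathbf x,\mathbf y,BD)$.
   Context: $[a]_+=\max(a,0)$; all matrices are integer; $BD$ is again skew-symmetrizable. Mutation data: positive integers $\mathbf d$ and frozen coefficients $z_{i,s}$ ($1\le s\le d_i-1$) with $z_{i,s}=z_{i,d_i-s}$, $z_{i,0}=z_{i,d_i}=1$. For formal variables $\mathbf y,\mathbf z$, $\mathrm{Trop}(\mathbf y,\mathbf z)$ is the free abelian multiplicative group they generate with $\oplus$ the componentwise minimum of exponents. The $(\mathbf d,\mathbf z)$-mutation at $k$ acts on a skew-symmetrizable $B=(b_{ij})$ and $y$-variables by: $b'_{ij}=-b_{ij}$ if $i=k$ or $j=k$, else $b'_{ij}=b_{ij}+d_k([-b_{ik}]_+b_{kj}+b_{ik}[b_{kj}]_+)$; $y'_k=y_k^{-1}$, $y'_i=y_i(y_k^{[\varepsilon b_{ki}]_+})^{d_k}(\bigoplus_{s=0}^{d_k}z_{k,s}y_k^{\varepsilon s})^{-b_{ki}}$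 ($i\ne k$), $\varepsilon=\pm1$. $\mathbb T_n$ is the $n$-regular tree with edges labeled $1,\dots,n$, distinct labels at each vertex. A $(\mathbf d,\mathbf z)$-cluster pattern with principal coefficients assigns seeds in $\mathrm{Trop}(\mathbf y,\mathbf z)$ to vertices, related by mutation at $k$ along edges labeled $k$, with initial seed $(\mathbf x,\mathbf y,B)$ at a fixed vertex $t_0$ whose $y$-variables are the generators. Each $y^t_j$ is a Laurent monomial $\prod_iy_i^{c^t_{ij}}$ in $\mathbf y$ alone; $C^t=(c^t_{ij})$ is the $C$-matrix. The ordinary cluster pattern with principal coefficients is the special case $\mathbf d=(1,\dots,1)$ (no $\mathbf z$), with $C$-matrices defined the same way. *)

From HB Require Import structures.
From mathcomp Require Import all_boot all_order all_algebra.
Set Implicit Arguments. Unset Strict Implicit. Unset Printing Implicit Defensive.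
Import Order.TTheory GRing.Theory Num.Theory.
Local Open Scope ring_scope.

Definition skew_symmetrizable (n : nat) (B : 'M[int]_n) : Prop :=
  exists s : 'I_n -> nat, (forall i, (0 < s i)%N) /\
    forall i j, (s i)%:Z * B i j = - ((s j)%:Z * B j i).

Definition posp (a : int) : int := Num.max a 0.

(* Generators of Trop(y,z): y_i, and z_{i,s} (s taken as its canonical
   representative min(s, d_i - s), encoding z_{i,s} = z_{i,d_i-s}). *)
Inductive gen (n : nat) : Type := GY of 'I_n | GZ of 'I_n & nat.
Arguments GY {n}. Arguments GZ {n}.

(* An element of Trop(y,z) = its exponent vector; product = pointwise sum,
   tropical sum (+) = pointwise min. *)
Definition trop (n : nat) := gen n -> int.

Definition trop_one n : trop n := fun _ => 0.
Definition trop_y n (i : 'I_n) : trop n :=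
  fun g => match g with GY j => (i == j)%:R | GZ _ _ => 0 end.
Definition trop_z n (d : 'I_n -> nat) (k : 'I_n) (s : nat) : trop n :=
  if (0 < s < d k)%N then
    fun g => match g with
             | GY _ => 0
             | GZ j r => ((j == k) && (r == minn s (d k - s)))%:R end
  else @trop_one n.

(* exponent of (+)_{s=0}^{d_k} z_{k,s} y_k^{s}  (epsilon = +1) *)
Definition trop_sum_k n (d : 'I_n -> nat) (k : 'I_n) (yk : trop n) : trop n :=
  fun g => let f s := trop_z d k s g + s%:Z * yk g in
           foldr (fun s acc => Num.min (f s) acc) (f 0%N) (iota 1 (d k)).

Definition seed n := ('M[int]_n * ('I_n -> trop n))%type.

Definition bmut n (d : 'I_n -> nat) (k : 'I_n) (B : 'M[int]_n) : 'M[int]_n :=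
  \matrix_(i, j) if (i == k) || (j == k) then - B i j
                 else B i j + (d k)%:Z * (posp (- B i k) * B k j + B i k * posp (B k j)).

Definition ymut n (d : 'I_n -> nat) (k : 'I_n) (B : 'M[int]_n) (y : 'I_n -> trop n)
  : 'I_n -> trop n :=
  fun i => if i == k then (fun g => - y k g)
           else (fun g => y i g + (d k)%:Z * posp (B k i) * y k g
                          - B k i * trop_sum_k d k (y k) g).

Definition mutate n (d : 'I_n -> nat) (k : 'I_n) (S : seed n) : seed n :=
  (bmut d k S.1, ymut d k S.1 S.2).

(* Vertices of T_n are identified with reduced words in the edge labels
   (the path from t0). *)
Definition reduced n (w : seq 'I_n) : bool := sorted (fun a b => a != b) w.

Definition seed_at n (d : 'I_n -> nat) (B : 'M[int]_n) (w : seq 'I_n) : seed n :=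
  foldl (fun S k => mutate d k S) (B, @trop_y n) w.

Definition Cmat n (d : 'I_n -> nat) (B : 'M[int]_n) (w : seq 'I_n) : 'M[int]_n :=
  \matrix_(i, j) (seed_at d B w).2 j (GY i).

(* ordinary cluster pattern: d = (1,...,1) (all z's are trivial) *)
Definition Cmat_ord n (B : 'M[int]_n) (w : seq 'I_n) : 'M[int]_n :=
  Cmat (fun _ => 1%N) B w.

Definition diagD n (d : 'I_n -> nat) : 'M[int]_n := diag_mx (\row_j (d j)%:Z).

From HB Require Import structures.
From mathcomp Require Import all_boot all_order all_algebra.
From mathcomp Require Import zify ring.
Import Order.TTheory GRing.Theory Num.Theory.
Local Open Scope ring_scope.
Set Implicit Arguments. Unset Strict Implicit.

(* The z-coefficients never involve the generators y_l, so on the y-exponents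
   the tropical sum of the (d,z)-mutation at k collapses to d_k [c]_- .  Hence
   the (d,z)-mutation of (B, C) and the ordinary mutation of (B D, D^-1 C D)
   are given by the same piecewise-linear formulas, and the relations
   B' = B D and d_l c'_lj = c_lj d_j are preserved along every path. *)

Lemma posp_mulrz (a : int) (m : nat) : posp (a * m%:Z) = posp a * m%:Z.
Proof. rewrite /posp; lia. Qed.

Lemma min0_mulrz (a : int) (m : nat) : Num.min 0 (a * m%:Z) = Num.min 0 a * m%:Z.
Proof. lia. Qed.

Lemma trop_z_GY n (d : 'I_n -> nat) k s l : trop_z d k s (GY l) = 0.
Proof. by rewrite /trop_z; case: ifP. Qed.

Lemma foldr_min_iota (c : int) (g : nat -> int) :
    (forall s, g s = s%:Z * c) -> forall a m,
  foldr (fun s acc => Num.min (g s) acc) (g 0%N) (iota a m.+1)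
  = Num.min 0 ((a + m)%:Z * c).
Proof.
move=> gE; have g0 : g 0%N = 0 by rewrite gE mul0r.
move=> a m; elim: m a => [|m IHm] a; first by rewrite /= g0 gE addn0; lia.
have := IHm a.+1; rewrite /= => ->; rewrite gE; nia.
Qed.

Lemma trop_sum_k_GY n (d : 'I_n -> nat) k (yk : trop n) l :
  trop_sum_k d k yk (GY l) = (d k)%:Z * Num.min 0 (yk (GY l)).
Proof.
rewrite /trop_sum_k; set c := yk (GY l).
have gE s : trop_z d k s (GY l) + s%:Z * c = s%:Z * c by rewrite trop_z_GY add0r.
case: (d k) => [|m]; first by rewrite /= gE !mul0r.
rewrite (foldr_min_iota gE) add1n; lia.
Qed.

Lemma bmut_mul_diagD n (d : 'I_n -> nat) k (B : 'M[int]_n) :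
  bmut (fun _ => 1%N) k (B *m diagD d) = bmut d k B *m diagD d.
Proof.
apply/matrixP => i j; rewrite /diagD !mul_mx_diag /bmut !mxE.
case: ifP => _; first by rewrite mulNr.
by rewrite -mulNr posp_mulrz posp_mulrz; ring.
Qed.

Definition rescaled_seeds n (d : 'I_n -> nat) (S S' : seed n) : Prop :=
  S'.1 = S.1 *m diagD d /\
  forall l j, (d l)%:Z * S'.2 j (GY l) = S.2 j (GY l) * (d j)%:Z.

Lemma rescaled_mutate n (d : 'I_n -> nat) k (S S' : seed n) :
  rescaled_seeds d S S' ->
  rescaled_seeds d (mutate d k S) (mutate (fun _ => 1%N) k S').
Proof.
case: S S' => [B y] [B' y'] [/= ->] yE; split => /=; first exact: bmut_mul_diagD.
move=> l j; rewrite /ymut; case: eqP => [->|_]; first by rewrite mulrN yE mulNr.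
have minE : (d l)%:Z * Num.min 0 (y' k (GY l))
            = Num.min 0 (y k (GY l)) * (d k)%:Z.
  by rewrite mulrC -min0_mulrz -yE [_ * y' k _]mulrC min0_mulrz.
rewrite !trop_sum_k_GY mul_mx_diag !mxE posp_mulrz.
have -> (a b c e f g h : int) : h * (a + 1%:Z * (b * g) * c - e * g * (1%:Z * f))
    = h * a + b * g * (h * c) - e * g * (h * f) by ring.
by rewrite minE !yE; ring.
Qed.

Lemma rescaled_seed_at n (d : 'I_n -> nat) (B : 'M[int]_n) w :
  rescaled_seeds d (seed_at d B w) (seed_at (fun _ => 1%N) (B *m diagD d) w).
Proof.
have init : rescaled_seeds d (B, @trop_y n) (B *m diagD d, @trop_y n).
  by split => // l m /=; rewrite /trop_y; case: eqP => [->|]; rewrite ?mulr0 ?mul0r ?mulr1 ?mul1r.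
rewrite /seed_at; elim: w (B, _) (B *m diagD d, _) init => //= k w IHw S S' HS.
exact/IHw/rescaled_mutate.
Qed.

Theorem mainTheorem8 (n : nat) (B : 'M[int]_n) (d : 'I_n -> nat)
  (hB : skew_symmetrizable B) (hd : forall i, (0 < d i)%N)
  (w : seq 'I_n) (hw : reduced w) :
  forall i j : 'I_n,
    ((Cmat d B w i j)%:~R * (d j)%:R / (d i)%:R : rat)
    = (Cmat_ord (B *m diagD d) w i j)%:~R.
Proof.
move=> i j; have [_ CE] := rescaled_seed_at d B w.
have di_neq0 : ((d i)%:R : rat) != 0 by rewrite pnatr_eq0 -lt0n hd.
apply: (mulfI di_neq0); rewrite mulrC divfK // /Cmat_ord /Cmat !mxE.
by rewrite -[(d i)%:R]/((d i)%:Z%:~R : rat) -[(d j)%:R]/((d j)%:Z%:~R : rat) -!intrM CE.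
Qed.
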